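(* Let $d_1,\dots,d_n$ be positive integers and let $a_1,\dots,a_n\in\mathbb{F}_q^*$. Let $$N_0^*=\#\{(x_1,\dots,x_n)\in(\mathbb{F}_q^* )^n : a_1x_1^{d_1}+\cdots+a_nx_n^{d_n}=0\}.$$ Then $$\left|N_0^*-\frac1q(q-1)^n\right|\le\frac{q-1}{q}+\sum_{e=0}^{n-1}\ \sum_{1\le i_{e+1}<\cdots<i_n\le n}\ \sum_{\substack{1\le l_{i_j}\le d_{i_j}-1\ (e+1\le j\le n)\\ \frac{l_{i_{e+1}}}{d_{i_{e+1}}}+\cdots+\frac{l_{i_n}}{d_{i_n}}\in\mathbb{Z}}}(q-1)\,q^{\frac{n-e}{2}-1},$$ where the innermost sum counts tuples $(l_{i_{e+1}},\dots,l_{i_n})$ of integers with the indicated properties. *)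

From HB Require Import structures.
From mathcomp Require Import all_boot all_order all_algebra.
Set Implicit Arguments. Unset Strict Implicit. Unset Printing Implicit Defensive.
Import Order.TTheory GRing.Theory Num.Theory.
Local Open Scope ring_scope.

Definition Nstar0 (F : finFieldType) (n : nat) (d : 'I_n -> nat) (a : 'I_n -> F)
  : nat :=
  #|[set x : {ffun 'I_n -> F} |
      [forall i, x i != 0] & \sum_(i < n) a i * x i ^+ d i == 0]|.

(* A tuple is encoded as a dependent
   finite function l with l i : 'I_(d i) (so l i <= d i - 1), l i >= 1 on S
   and l i = 0 off S. *)
Definition lcount (n : nat) (d : 'I_n -> nat) (S : {set 'I_n}) : nat :=
  #|[set l : {dffun forall i : 'I_n, 'I_(d i)} |
      [forall i, (i \in S) ==> (0 < (l i : nat))%N] &&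
      [forall i, (i \notin S) ==> ((l i : nat) == 0%N)] &&
      ((\sum_(i in S) ((l i : nat)%:Q / (d i)%:Q)) \is a Num.int)]|.

From HB Require Import structures.
From mathcomp Require Import all_boot all_order all_algebra.
From mathcomp Require Import cyclic all_field.
From mathcomp.real_closed Require Import complex.
Import Order.TTheory GRing.Theory Num.Theory.
Local Open Scope ring_scope.

Set Implicit Arguments. Unset Strict Implicit. Unset Printing Implicit Defensive.

(* Write m = q - 1, fix a nontrivial additive character psi of F, a generator g
   of F^* and a primitive m-th root of unity w in R[i], and let chi_k be the
   multiplicative character g ^+ j |-> w ^+ (k * j).  Expanding the indicator
   of [sum_i a_i x_i^d_i = 0] with psi, and counting the solutions of
   x^d = y with the chi_k, m | k d, gives
     q N = m^n + sum_k [m | sum_i k_i] m prod_i chi_(k_i)(a_i) g(k_i),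
   over tuples k with m | k_i d_i, where g(k) is a Gauss sum.  Since
   g(0) = -1 and |g(k)| = sqrt q otherwise, a tuple with support S
   contributes at most (m/q) sqrt q ^ |S|.  Finally k |-> (k_i d_i / m)_i
   injects the tuples with nonempty support S into the tuples counted by
   [lcount d S], and the empty support accounts for the term (q - 1)/q. *)

Lemma dvdn_ltn_eq0 (m k : nat) : (k < m)%N -> (m %| k)%N = (k == 0)%N.
Proof.
case: k => [|k] lt_km; first by rewrite dvdn0.
by apply: contraTF lt_km => /(dvdn_leq (ltn0Sn k)); rewrite -leqNgt.
Qed.

Lemma prodr_sum_ffun (R : comPzRingType) (n : nat) (J : finType)
    (P : 'I_n -> pred J) (h : 'I_n -> J -> R) :
  \prod_i \sum_(j | P i j) h i j =
  \sum_(f : {ffun 'I_n -> J} | [forall i, P i (f i)]) \prod_i h i (f i).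
Proof.
under eq_bigr => i _ do rewrite big_mkcond /=.
rewrite bigA_distr_bigA /= [RHS]big_mkcond /=; apply: eq_bigr => f _.
case: ifP => [/forallP Pf|/negbT]; first by apply: eq_bigr => i _; rewrite Pf.
by rewrite negb_forall => /existsP[i Pfi]; rewrite (bigD1 i) //= (negbTE Pfi) mul0r.
Qed.

Lemma sum_expr_unity_root (R : idomainType) (m : nat) (u : R) :
  u ^+ m = 1 -> \sum_(k < m) u ^+ k = if u == 1 then m%:R else 0.
Proof.
move=> um; have [->|u_neq1] := eqVneq u 1.
  by under eq_bigr do rewrite expr1n; rewrite sumr_const card_ord.
have := subrX1 u m; rewrite um subrr => /esym/eqP.
by rewrite mulf_eq0 subr_eq0 (negbTE u_neq1) => /eqP.
Qed.

Lemma finField_prim_root_exists (F : finFieldType) :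
  exists g : F, (#|F|.-1).-primitive_root g.
Proof.
have q_gt1 := finNzRing_gt1 F.
have m_gt0 : (0 < #|F|.-1)%N by rewrite -ltnS prednK // ltnW.
have : has (#|F|.-1).-primitive_root (enum [pred x : F | x != 0]).
  apply: has_prim_root => //; last by rewrite -cardE cardC1.
  - apply/allP=> x; rewrite mem_enum inE => x_neq0.
    rewrite unity_rootE; apply/eqP; apply: (mulfI x_neq0).
    by rewrite -exprS prednK ?expf_card ?mulr1 // ltnW.
  - exact: enum_uniq.
by case/hasP=> g _; exists g.
Qed.

Lemma numClosed_prim_root_exists (C : numClosedFieldType) (n : nat) :
  (0 < n)%N -> exists z : C, n.-primitive_root z.
Proof.
move=> n_gt0; have [r Dp] := closed_field_poly_normal ('X^n - 1 : {poly C}).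
rewrite (monicP _) ?monicXnsubC // scale1r in Dp.
have rn1 : all n.-unity_root r by apply/allP=> z; rewrite -root_prod_XsubC -Dp.
have sz_r : (n < (size r).+1)%N by rewrite -(size_prod_XsubC r id) -Dp size_XnsubC.
have [|z] := hasP (has_prim_root n_gt0 rn1 _ sz_r); last by exists z.
by rewrite -separable_prod_XsubC -Dp separable_Xn_sub_1 // pnatr_eq0 -lt0n.
Qed.

Lemma prim_root_norm1 (C : numClosedFieldType) (n : nat) (z : C) :
  n.-primitive_root z -> `|z| = 1.
Proof.
move=> pz; have := congr1 (fun x => `|x|) (prim_expr_order pz).
by rewrite normrX normr1 => /eqP; rewrite pexpr_eq1 ?(prim_order_gt0 pz) // => /eqP.
Qed.

Lemma finField_functional_exists (F : finFieldType) :
  exists p, exists f : {additive F -> 'F_p}, prime p /\ f 1 != 0.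
Proof.
have [p p_pr charFp] := finPcharP F; exists p.
pose V := pPrimeCharType charFp; pose e := vbasis (fullv : {vspace V}).
have [i coord1] : exists i, coord e i (1 : V) != 0.
  apply/existsP; apply: contraT; rewrite negb_exists => /forallP coord0.
  have := coord_vbasis (memvf (1 : V)).
  rewrite big1 => [/eqP|i _]; first by rewrite oner_eq0.
  by rewrite (eqP (negbNE (coord0 i))) scale0r.
by exists (coord e i : {additive V -> 'F_p}).
Qed.

Lemma add_char_exists (F : finFieldType) (C : numClosedFieldType) :
  exists psi : F -> C, [/\ forall x y, psi (x + y) = psi x * psi y,
                           psi 1 != 1 & forall x, `|psi x| = 1].
Proof.
have [p [f [p_pr f1]]] := finField_functional_exists F.
set P := (Zp_trunc (pdiv p)).+2.
have [z pz] := @numClosed_prim_root_exists C P isT.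
exists (fun x => z ^+ (f x : nat)); split.
- by move=> x y; rewrite raddfD -exprD (prim_expr_mod pz).
- rewrite -(prim_order_dvd pz) dvdn_ltn_eq0 ?ltn_ord //.
- by move=> x; rewrite normrX (prim_root_norm1 pz) expr1n.
Qed.

Lemma invC_norm1 (C : numClosedFieldType) (z : C) : `|z| = 1 -> z^-1 = z^*.
Proof. by move=> z1; rewrite invC_norm z1 expr1n invr1 mul1r. Qed.

Section Exponents.
Variables (n m : nat) (d : 'I_n -> nat).
Hypothesis m_gt0 : (0 < m)%N.
Hypothesis d_gt0 : forall i, (0 < d i)%N.

(* k encodes the character tuple (chi_(k_i))_i; membership says that
   chi_(k_i)^(d_i) = 1 for all i and that prod_i chi_(k_i) = 1. *)
Definition zero_sum_exps := [set k : {ffun 'I_n -> 'I_m} |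
   [forall i, (m %| k i * d i)%N] && (m %| \sum_i (k i : nat))%N].

Definition exp_support (k : {ffun 'I_n -> 'I_m}) := [set i | (k i : nat) != 0%N].

Lemma scaled_exp_lt (k : {ffun 'I_n -> 'I_m}) i : (k i * d i %/ m < d i)%N.
Proof. by rewrite ltn_divLR // mulnC ltn_pmul2l. Qed.

Definition scaled_exp (k : {ffun 'I_n -> 'I_m}) : {dffun forall i, 'I_(d i)} :=
  [ffun i => Ordinal (scaled_exp_lt k i)].

Lemma scaled_expE k i : (scaled_exp k i : nat) = (k i * d i %/ m)%N.
Proof. by rewrite ffunE. Qed.

Definition lcount_tuples (S : {set 'I_n}) := [set l : {dffun forall i, 'I_(d i)} |
  [forall i, (i \in S) ==> (0 < (l i : nat))%N] &&
  [forall i, (i \notin S) ==> ((l i : nat) == 0%N)] &&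
  ((\sum_(i in S) ((l i : nat)%:Q / (d i)%:Q)) \is a Num.int)].

Lemma lcountE S : lcount d S = #|lcount_tuples S|.
Proof. by []. Qed.

Lemma scaled_exp_in_lcount S k : k \in zero_sum_exps -> exp_support k = S ->
  scaled_exp k \in lcount_tuples S.
Proof.
rewrite inE => /andP[/forallP dvd_kd dvd_sum] suppk.
have scaledK i : ((scaled_exp k i : nat) * m = k i * d i)%N.
  by rewrite scaled_expE divnK.
have scaled_eq0 i : ((scaled_exp k i : nat) == 0%N) = ((k i : nat) == 0%N).
  by rewrite -(eqn_pmul2r m_gt0) mul0n scaledK muln_eq0 (negbTE (lt0n_neq0 (d_gt0 i))) orbF.
have m_neq0 : (m%:R : rat) != 0 by rewrite pnatr_eq0 -lt0n.
rewrite inE -andbA; apply/and3P; split.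
- by apply/forallP => i; apply/implyP; rewrite -suppk inE -scaled_eq0 lt0n.
- by apply/forallP => i; apply/implyP; rewrite -suppk inE -scaled_eq0 negbK.
have -> : \sum_(i in S) ((scaled_exp k i : nat)%:Q / (d i)%:Q)
          = (\sum_i (k i : nat))%:R / m%:Q.
  rewrite -!pmulrn natr_sum mulr_suml [RHS](bigID (mem S)) /= [X in _ = _ + X]big1 ?addr0.
    apply: eq_bigr => i _; apply/eqP.
    by rewrite eqr_div ?pnatr_eq0 -?lt0n // -!natrM scaledK.
  by move=> i; rewrite -suppk inE negbK => /eqP ->; rewrite mul0r.
by case/dvdnP: dvd_sum => t ->; rewrite -!pmulrn natrM mulfK.
Qed.

Lemma card_exp_support_le_lcount S :
  (#|[set k in zero_sum_exps | exp_support k == S]| <= lcount d S)%N.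
Proof.
have inj : {in [set k in zero_sum_exps | exp_support k == S] &, injective scaled_exp}.
  move=> k k'; rewrite !inE => /andP[/andP[/forallP dvd_k _] _].
  move=> /andP[/andP[/forallP dvd_k' _] _] eq_kk'.
  apply/ffunP => i; apply/val_inj/eqP; rewrite -(eqn_pmul2r (d_gt0 i)).
  rewrite -(divnK (dvd_k i)) -(divnK (dvd_k' i)) -!scaled_expE.
  by rewrite eq_kk'.
rewrite lcountE -(card_in_imset inj); apply/subset_leq_card/subsetP => l.
case/imsetP => k; rewrite inE => /andP[zk /eqP suppk] ->.
exact: scaled_exp_in_lcount.
Qed.

Lemma exp_support_eq0 : #|[set k in zero_sum_exps | exp_support k == set0]| = 1%N.
Proof.
apply/eqP; rewrite eqn_leq; apply/andP; split.
  apply/card_le1_eqP => k k'; rewrite !inE => /andP[_ /eqP k0] /andP[_ /eqP k'0].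
  apply/ffunP => i; apply/val_inj => /=.
  have supp0 (l : {ffun 'I_n -> 'I_m}) : exp_support l = set0 -> (l i : nat) = 0%N.
    by move=> l0; apply/eqP; apply: contraFT (in_set0 i) => li; rewrite -l0 inE.
  by rewrite !supp0.
apply/card_gt0P; exists [ffun=> Ordinal m_gt0].
rewrite !inE; apply/andP; split.
  by apply/andP; split; [apply/forallP => i | under eq_bigr do rewrite ffunE];
     rewrite ?ffunE ?big1 ?dvdn0.
by apply/eqP/setP => i; rewrite !inE ffunE.
Qed.

Lemma sum_card_eq_subn (T : numDomainType) (S : {set 'I_n}) (y : T) :
  \sum_(e < n) (if #|S| == (n - e)%N then y else 0) = if S != set0 then y else 0.
Proof.
have [->|S_neq0] := eqVneq S set0.
  by rewrite big1 // => e _; rewrite cards0 eq_sym subn_eq0 leqNgt ltn_ord.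
have cardS_gt0 : (0 < #|S|)%N by rewrite card_gt0.
have cardS_le : (#|S| <= n)%N by rewrite -[X in (_ <= X)%N](card_ord n) max_card.
have e0_lt : (n - #|S| < n)%N by rewrite ltn_subrL cardS_gt0 (leq_trans cardS_gt0).
rewrite (bigD1 (Ordinal e0_lt)) //= subKn // eqxx big1 ?addr0 // => e e_neq.
case: eqP => // cardS; case/eqP: e_neq; apply/val_inj => /=.
by rewrite cardS subKn // ltnW.
Qed.

Lemma sum_pow_exp_support_le (T : numDomainType) (r : T) : 0 <= r ->
  \sum_(k in zero_sum_exps) r ^+ #|exp_support k| <=
  1 + \sum_(e < n) \sum_(S : {set 'I_n} | #|S| == (n - e)%N)
        (lcount d S)%:R * r ^+ (n - e).
Proof.
move=> r_ge0; rewrite (partition_big exp_support predT) //=.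
have sum_fibre S : \sum_(k | (k \in zero_sum_exps) && (exp_support k == S))
    r ^+ #|exp_support k| = #|[set k in zero_sum_exps | exp_support k == S]|%:R * r ^+ #|S|.
  rewrite (eq_bigr (fun=> r ^+ #|S|)) => [|k /andP[_ /eqP->]//].
  by rewrite sumr_const mulr_natl; congr (_ *+ _); apply: eq_card => k; rewrite inE.
under eq_bigr => S _ do rewrite sum_fibre.
rewrite (bigD1 set0) //= exp_support_eq0 cards0 expr0 mulr1 lerD2l.
have -> : \sum_(e < n) \sum_(S : {set 'I_n} | #|S| == (n - e)%N)
            (lcount d S)%:R * r ^+ (n - e)
        = \sum_(S : {set 'I_n} | S != set0) (lcount d S)%:R * r ^+ #|S|.
  rewrite [RHS]big_mkcond /=.
  under [RHS]eq_bigr => S _ do rewrite -sum_card_eq_subn.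
  rewrite exchange_big /=; apply: eq_bigr => e _.
  by rewrite big_mkcond /=; apply: eq_bigr => S _; case: eqP => // ->.
apply: ler_sum => S _; apply: ler_wpM2r; first exact: exprn_ge0.
by rewrite ler_nat card_exp_support_le_lcount.
Qed.

End Exponents.

Section GaussSums.
Variables (F : finFieldType) (C : numClosedFieldType).
Local Notation q := #|F|.
Local Notation m := (#|F|.-1).
Variable psi : F -> C.
Hypothesis psiD : forall x y, psi (x + y) = psi x * psi y.
Hypothesis psi1 : psi 1 != 1.
Hypothesis norm_psi : forall x, `|psi x| = 1.
Variables (w : C) (g : F).
Hypothesis w_prim : m.-primitive_root w.
Hypothesis g_prim : m.-primitive_root g.

Lemma q_gt1 : (1 < q)%N. Proof. exact: finNzRing_gt1. Qed.

Lemma m_gt0 : (0 < m)%N. Proof. by rewrite -ltnS prednK ?q_gt1 // ltnW ?q_gt1. Qed.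

Lemma q_neq0 : (q%:R : C) != 0.
Proof. by rewrite pnatr_eq0 -lt0n (ltnW q_gt1). Qed.

Lemma m_neq0 : (m%:R : C) != 0.
Proof. by rewrite pnatr_eq0 -lt0n m_gt0. Qed.

Lemma psi_neq0 x : psi x != 0.
Proof. by rewrite -normr_eq0 norm_psi oner_eq0. Qed.

Lemma psi0 : psi 0 = 1.
Proof. by apply: (mulfI (psi_neq0 0)); rewrite -psiD addr0 mulr1. Qed.

Lemma psiN x : psi (- x) = (psi x)^-1.
Proof. by apply: (mulfI (psi_neq0 x)); rewrite -psiD subrr psi0 divff ?psi_neq0. Qed.

Lemma sum_psi : \sum_x psi x = 0.
Proof.
have shift1 : \sum_x psi x = (\sum_x psi x) * psi 1.
  by rewrite mulr_suml (reindex_inj (addIr 1)); apply: eq_bigr => x _; exact: psiD.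
have : (\sum_x psi x) * (1 - psi 1) = 0 by rewrite mulrBr mulr1 -shift1 subrr.
by move/eqP; rewrite mulf_eq0 subr_eq0 [1 == _]eq_sym (negbTE psi1) orbF => /eqP.
Qed.

Lemma sum_psiM b : \sum_s psi (s * b) = if b == 0 then q%:R else 0.
Proof.
have [->|b_neq0] := eqVneq b 0.
  by under eq_bigr do rewrite mulr0 psi0; rewrite sumr_const cardT -cardE.
by rewrite -[RHS]sum_psi [RHS](reindex_inj (mulIf b_neq0)).
Qed.

Lemma sum_nz_psiM b :
  \sum_(s | s != 0) psi (s * b) = (if b == 0 then q%:R else 0) - 1.
Proof. by rewrite -sum_psiM [X in _ = X - _](bigD1 0) //= mul0r psi0 addrC addrK. Qed.

Lemma eq0_mean_psi (c : F) : ((c == 0)%:R : C) = q%:R^-1 * \sum_s psi (s * c).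
Proof. by rewrite sum_psiM; case: eqP => _; rewrite ?mulVf ?q_neq0 ?mulr0. Qed.

Lemma unit_expr_pred (x : F) : x != 0 -> x ^+ m = 1.
Proof.
move=> x_neq0; apply: (mulfI x_neq0).
by rewrite -exprS prednK ?expf_card ?mulr1 // ltnW ?q_gt1.
Qed.

Definition gpowers := mkseq (fun j => g ^+ j) m.

Lemma gpowers_uniq : uniq gpowers.
Proof.
rewrite map_inj_in_uniq ?iota_uniq // => i j; rewrite !mem_iota !add0n => lt_i lt_j /eqP.
by rewrite (eq_prim_root_expr g_prim) !modn_small // => /eqP.
Qed.

Lemma mem_gpowers x : (x \in gpowers) = (x != 0).
Proof.
apply/idP/idP => [/mapP[i _ ->]|x_neq0].
  by rewrite expf_neq0 // (prim_root_eq0 g_prim) -lt0n m_gt0.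
have [i ->] := prim_rootP g_prim (unit_expr_pred x_neq0).
by apply/mapP; exists (i : nat); rewrite // mem_iota add0n ltn_ord.
Qed.

(* Discrete logarithm to the base g; junk value [m] at 0. *)
Definition dlog (x : F) : nat := index x gpowers.

Lemma dlog_lt x : x != 0 -> (dlog x < m)%N.
Proof. by rewrite -mem_gpowers -index_mem size_mkseq. Qed.

Lemma dlogK x : x != 0 -> g ^+ dlog x = x.
Proof.
move=> x_neq0; have := nth_index 0 (etrans (mem_gpowers x) x_neq0).
by rewrite nth_mkseq ?dlog_lt.
Qed.

Lemma dlog_expr j : (j < m)%N -> dlog (g ^+ j) = j.
Proof.
move=> lt_jm; rewrite /dlog -{1}(nth_mkseq 0 (fun i => g ^+ i) lt_jm).
by rewrite index_uniq ?size_mkseq ?gpowers_uniq.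
Qed.

Lemma dlog1 : dlog 1 = 0%N.
Proof. by rewrite -(expr0 g) dlog_expr ?m_gt0. Qed.

Lemma dlog_eq0 z : z != 0 -> (dlog z == 0%N) = (z == 1).
Proof.
move=> z_neq0; apply/eqP/eqP => [dz0|->]; last exact: dlog1.
by rewrite -(dlogK z_neq0) dz0 expr0.
Qed.

Lemma dlogM x y : x != 0 -> y != 0 -> dlog (x * y) = (dlog x + dlog y) %[mod m].
Proof.
move=> x_neq0 y_neq0; apply/eqP.
by rewrite -(eq_prim_root_expr g_prim) exprD !dlogK ?mulf_neq0.
Qed.

Lemma sum_nz_gpowers (h : F -> C) : \sum_(x | x != 0) h x = \sum_(j < m) h (g ^+ j).
Proof.
rewrite -(big_mkord xpredT (fun j => h (g ^+ j))) -(big_map (fun j => g ^+ j) xpredT h).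
rewrite -/(mkseq _ _) -/gpowers -big_enum /= subn0; apply: perm_big.
apply: uniq_perm; [exact: enum_uniq | exact: gpowers_uniq |].
by move=> x; rewrite mem_enum mem_gpowers.
Qed.

Definition chi (k : nat) (x : F) : C := w ^+ (k * dlog x).

Lemma chiM k x y : x != 0 -> y != 0 -> chi k (x * y) = chi k x * chi k y.
Proof.
move=> x_neq0 y_neq0; rewrite /chi -exprD -mulnDr; apply/eqP.
by rewrite (eq_prim_root_expr w_prim) -modnMmr dlogM // modnMmr.
Qed.

Lemma chi1 k : chi k 1 = 1.
Proof. by rewrite /chi dlog1 muln0 expr0. Qed.

Lemma norm_chi k x : `|chi k x| = 1.
Proof. by rewrite normrX (prim_root_norm1 w_prim) expr1n. Qed.

Lemma chi_neq0 k x : chi k x != 0.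
Proof. by rewrite -normr_eq0 norm_chi oner_eq0. Qed.

Lemma chiV k x : x != 0 -> chi k x^-1 = (chi k x)^-1.
Proof.
move=> x_neq0; apply: (mulfI (chi_neq0 k x)).
by rewrite -chiM ?invr_eq0 // mulfV // divff ?chi_neq0 // chi1.
Qed.

Lemma chiX k x e : x != 0 -> chi k (x ^+ e) = chi (k * e) x.
Proof.
move=> x_neq0; have -> : chi (k * e) x = chi k x ^+ e by rewrite /chi -exprM mulnAC.
by elim: e => [|e IHe]; rewrite ?chi1 // !exprS chiM ?expf_neq0 ?IHe.
Qed.

Lemma prod_chi (I : finType) (P : pred I) (k : I -> nat) x :
  \prod_(i | P i) chi (k i) x = chi (\sum_(i | P i) k i) x.
Proof. by rewrite /chi big_distrl (big_morph _ (exprD w) (expr0 w)). Qed.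

Lemma sum_chi k : \sum_(x | x != 0) chi k x = if (m %| k)%N then m%:R else 0.
Proof.
rewrite sum_nz_gpowers (eq_bigr (fun j : 'I_m => (w ^+ k) ^+ j)) => [|j _]; last first.
  by rewrite /chi dlog_expr // -exprM.
rewrite sum_expr_unity_root -?(prim_order_dvd w_prim) //.
by rewrite -exprM mulnC exprM (prim_expr_order w_prim) expr1n.
Qed.

Lemma sum_chiV k : ~~ (m %| k)%N -> \sum_(t | t != 0) (chi k t)^-1 = 0.
Proof.
move=> m_ndvd_k; rewrite (eq_bigr (fun t => chi k t^-1)) => [|t t_neq0]; last by rewrite chiV.
rewrite (reindex_inj invr_inj) /= (eq_big (fun t => t != 0) (chi k)) => [|t|t _].
- by rewrite sum_chi (negbTE m_ndvd_k).
- by rewrite invr_eq0.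
- by rewrite invrK.
Qed.

Lemma count_root_chi e y : y != 0 ->
  \sum_(x | x != 0) ((x ^+ e == y)%:R : C) =
  \sum_(k < m | (m %| k * e)%N) (chi k y)^-1.
Proof.
move=> y_neq0.
have orthogonality x : x != 0 -> ((x ^+ e == y)%:R : C) =
    m%:R^-1 * \sum_(k < m) chi k (x ^+ e) * (chi k y)^-1.
  move=> x_neq0; set z := x ^+ e / y.
  have z_neq0 : z != 0 by rewrite mulf_neq0 ?expf_neq0 ?invr_eq0.
  have chi_z (k : 'I_m) : chi k (x ^+ e) * (chi k y)^-1 = (w ^+ dlog z) ^+ k.
    by rewrite -chiV // -chiM ?expf_neq0 ?invr_eq0 // /chi -exprM mulnC.
  under eq_bigr do rewrite chi_z.
  rewrite sum_expr_unity_root; last first.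
    by rewrite -exprM mulnC exprM (prim_expr_order w_prim) expr1n.
  rewrite -(prim_order_dvd w_prim) dvdn_ltn_eq0 ?dlog_lt // dlog_eq0 //.
  rewrite /z (can2_eq (divfK y_neq0) (mulfK y_neq0)) mul1r.
  by case: eqP => _; rewrite ?mulr0 ?mulVf ?m_neq0.
under eq_bigr => x x_neq0 do rewrite (orthogonality x x_neq0).
rewrite -mulr_sumr exchange_big /= mulr_sumr [RHS]big_mkcond; apply: eq_bigr => k _.
rewrite -mulr_suml; under eq_bigr => x x_neq0 do rewrite chiX //.
rewrite sum_chi; case: ifP => _; last by rewrite mul0r mulr0.
by rewrite mulrA mulVf ?m_neq0 ?mul1r.
Qed.

Definition gauss (k : nat) : C := \sum_(z | z != 0) (chi k z)^-1 * psi z.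

Lemma sum_psi_monomial e b : b != 0 ->
  \sum_(x | x != 0) psi (b * x ^+ e) =
  \sum_(k < m | (m %| k * e)%N) chi k b * gauss k.
Proof.
move=> b_neq0.
have as_sum x : x != 0 ->
    psi (b * x ^+ e) = \sum_(y | y != 0) (x ^+ e == y)%:R * psi (b * y).
  move=> x_neq0; rewrite (bigD1 (x ^+ e)) ?expf_neq0 //= eqxx mul1r big1 ?addr0 //.
  by move=> y /andP[_ /negbTE]; rewrite eq_sym => ->; rewrite mul0r.
under eq_bigr => x x_neq0 do rewrite (as_sum x x_neq0).
rewrite exchange_big /=.
under eq_bigr => y y_neq0 do rewrite -mulr_suml (count_root_chi e y_neq0) mulr_suml.
rewrite exchange_big /=; apply: eq_bigr => k _.
rewrite /gauss mulr_sumr (reindex_inj (mulIf (invr_neq0 b_neq0))) /=.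
have nz_div z : (z / b != 0) = (z != 0) by rewrite mulf_eq0 invr_eq0 (negbTE b_neq0) orbF.
apply: eq_big => [z|z]; first exact: nz_div.
rewrite nz_div => z_neq0.
rewrite chiM ?invr_eq0 // chiV // invfM invrK [b * _]mulrC divfK //.
by rewrite mulrAC mulrC.
Qed.

Lemma gauss0 : gauss 0 = -1.
Proof.
rewrite /gauss; under eq_bigr do rewrite /chi mul0n expr0 invr1 mul1r.
have := sum_nz_psiM 1; rewrite oner_eq0 sub0r => <-.
by apply: eq_bigr => s _; rewrite mulr1.
Qed.

Lemma gauss_norm2 k : ~~ (m %| k)%N -> `|gauss k| ^+ 2 = q%:R.
Proof.
move=> m_ndvd_k; rewrite normCK.
have -> : (gauss k)^* = \sum_(v | v != 0) chi k v * psi (- v).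
  rewrite rmorph_sum; apply: eq_bigr => v _; rewrite rmorphM /=.
  have norm_chiV : `|(chi k v)^-1| = 1 by rewrite normfV norm_chi invr1.
  by rewrite -(invC_norm1 norm_chiV) invrK -(invC_norm1 (norm_psi _)) psiN.
rewrite mulr_suml; under eq_bigr => z _ do rewrite mulr_sumr.
rewrite exchange_big /=.
have subst v : v != 0 ->
    \sum_(z | z != 0) (chi k z)^-1 * psi z * (chi k v * psi (- v))
    = \sum_(t | t != 0) (chi k t)^-1 * psi (v * (t - 1)).
  move=> v_neq0; rewrite (reindex_inj (mulIf v_neq0)) /=.
  have nz_mul t : (t * v != 0) = (t != 0) by rewrite mulf_eq0 (negbTE v_neq0) orbF.
  apply: eq_big => [t|t]; first exact: nz_mul.
  rewrite nz_mul => t_neq0.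
  rewrite chiM // invfM mulrACA divfK ?chi_neq0 // -psiD.
  by rewrite mulrBr mulr1 [v * t]mulrC.
under eq_bigr => v v_neq0 do rewrite (subst v v_neq0).
rewrite exchange_big /=.
under eq_bigr => t _ do rewrite -mulr_sumr sum_nz_psiM subr_eq0.
rewrite (bigD1 1) ?oner_eq0 //= eqxx chi1 invr1 mul1r.
rewrite (eq_bigr (fun t => - (chi k t)^-1)) => [|t /andP[_ t_neq1]]; last first.
  by rewrite (negbTE t_neq1) sub0r mulrN1.
have := sum_chiV m_ndvd_k; rewrite (bigD1 1) ?oner_eq0 //= chi1 invr1 => /eqP.
by rewrite sumrN addrC addr_eq0 => /eqP ->; rewrite opprK subrK.
Qed.

Lemma norm_gauss (r : C) (k : 'I_m) : 0 <= r -> r ^+ 2 = q%:R ->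
  `|gauss k| = if (k : nat) == 0%N then 1 else r.
Proof.
move=> r_ge0 r2; case: eqP => [->|k_neq0]; first by rewrite gauss0 normrN normr1.
apply/eqP; rewrite -(eqrXn2 (ltn0Sn 1)) ?normr_ge0 // gauss_norm2 ?r2 //.
by rewrite dvdn_ltn_eq0 ?ltn_ord //; apply/eqP.
Qed.

Variables (n : nat) (d : 'I_n -> nat) (a : 'I_n -> F).
Hypothesis a_neq0 : forall i, a i != 0.

Lemma Nstar0_gauss : ((Nstar0 d a)%:R : C) = q%:R^-1 * (m%:R ^+ n +
  \sum_(k : {ffun 'I_n -> 'I_m} | [forall i, (m %| k i * d i)%N])
     (if (m %| \sum_i (k i : nat))%N then m%:R else 0) *
     \prod_i (chi (k i) (a i) * gauss (k i))).
Proof.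
have -> : ((Nstar0 d a)%:R : C) = \sum_(x : {ffun 'I_n -> F} | [forall i, x i != 0])
     ((\sum_i a i * x i ^+ d i == 0)%:R).
  rewrite /Nstar0 -sumr_const big_mkcond [RHS]big_mkcond /=; apply: eq_bigr => x _.
  by rewrite !inE; case: [forall i, _]; case: (_ == 0).
under eq_bigr => x _ do rewrite eq0_mean_psi.
rewrite -mulr_sumr; congr (_ * _).
under eq_bigr => x _ do under eq_bigr => s _ do
  rewrite mulr_sumr (big_morph psi psiD psi0).
rewrite exchange_big /=.
under eq_bigr => s _ do rewrite -(prodr_sum_ffun (fun i (y : F) => y != 0)
   (fun i y => psi (s * (a i * y ^+ d i)))).
rewrite (bigD1 0) //=; congr (_ + _).
  under eq_bigr => i _ do under eq_bigr => y _ do rewrite mul0r psi0.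
  by rewrite (eq_bigr (fun=> m%:R)) ?prodr_const ?card_ord // => i _;
     rewrite sumr_const cardC1.
have expand s : s != 0 -> \prod_i \sum_(y | y != 0) psi (s * (a i * y ^+ d i)) =
    \sum_(k : {ffun 'I_n -> 'I_m} | [forall i, (m %| k i * d i)%N])
      chi (\sum_i (k i : nat)) s * \prod_i (chi (k i) (a i) * gauss (k i)).
  move=> s_neq0.
  under eq_bigr => i _ do under eq_bigr => y _ do rewrite mulrA.
  under eq_bigr => i _ do rewrite sum_psi_monomial ?mulf_neq0 //.
  rewrite (prodr_sum_ffun (fun i (k : 'I_m) => (m %| k * d i)%N)
                        (fun i k => chi k (s * a i) * gauss k)).
  apply: eq_bigr => k _; rewrite -prod_chi -big_split /=; apply: eq_bigr => i _.
  by rewrite chiM // mulrA.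
under eq_bigr => s s_neq0 do rewrite (expand s s_neq0).
by rewrite exchange_big /=; apply: eq_bigr => k _; rewrite -mulr_suml sum_chi.
Qed.

Lemma Nstar0_dev_le (r : C) : 0 <= r -> r ^+ 2 = q%:R ->
  `|(Nstar0 d a)%:R - m%:R ^+ n / q%:R| <=
    m%:R / q%:R * \sum_(k in zero_sum_exps m d) r ^+ #|exp_support k|.
Proof.
move=> r_ge0 r2.
rewrite Nstar0_gauss mulrDr [_^-1 * _ ^+ n]mulrC addrAC subrr add0r.
rewrite normrM ger0_norm ?invr_ge0 ?ler0n // [m%:R / _]mulrC -mulrA.
apply: ler_wpM2l; first by rewrite invr_ge0 ler0n.
apply: le_trans (ler_norm_sum _ _ _) _.
rewrite mulr_sumr [X in _ <= X]big_mkcond [X in X <= _]big_mkcond /=.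
apply: ler_sum => k _; rewrite inE; case: [forall i, _] => //=; rewrite normrM.
have -> : `|\prod_i (chi (k i) (a i) * gauss (k i))| = r ^+ #|exp_support k|.
  rewrite normr_prod; under eq_bigr do rewrite normrM norm_chi mul1r (norm_gauss _ r_ge0 r2).
  rewrite (bigID (mem (exp_support k))) /= (eq_bigr (fun=> r)) => [|i]; last first.
    by rewrite inE => /negbTE ->.
  by rewrite prodr_const big1 ?mulr1 // => i; rewrite inE negbK => ->.
by case: ifP => _; rewrite ?normr_nat ?normr0 ?mul0r.
Qed.

End GaussSums.

Lemma normc_real (R : rcfType) (x : R) : `|x%:C%C| = (`|x|)%:C%C.
Proof. by rewrite normc_def /= expr0n /= addr0 sqrtr_sqr. Qed.

Lemma Nstar0_dev_le_real (F : finFieldType) (R : rcfType) (n : nat)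
    (d : 'I_n -> nat) (a : 'I_n -> F) : (forall i, a i != 0) ->
  `|(Nstar0 d a)%:R - (#|F|.-1)%:R ^+ n / #|F|%:R| <= (#|F|.-1)%:R / #|F|%:R *
    \sum_(k in zero_sum_exps #|F|.-1 d) Num.sqrt (#|F|%:R : R) ^+ #|exp_support k|.
Proof.
move=> a_neq0.
have [psi [psiD psi1 norm_psi]] := add_char_exists F R[i].
have [w w_prim] := numClosed_prim_root_exists R[i] (m_gt0 F).
set q : R := #|F|%:R.
have [g g_prim] := finField_prim_root_exists F.
have sqrt_ge0 : 0 <= (Num.sqrt q)%:C%C by rewrite lecR sqrtr_ge0.
have sqrt2 : (Num.sqrt q)%:C%C ^+ 2 = #|F|%:R.
  by rewrite -rmorphXn sqr_sqrtr ?ler0n // rmorph_nat.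
have := Nstar0_dev_le psiD psi1 norm_psi w_prim g_prim d a_neq0 sqrt_ge0 sqrt2.
rewrite -lecR -normc_real; congr (`|_| <= _).
  by rewrite rmorphB rmorphM rmorphXn fmorphV !rmorph_nat.
rewrite rmorphM rmorphM fmorphV !rmorph_nat rmorph_sum.
by congr (_ * _); apply: eq_bigr => k _; rewrite rmorphXn.
Qed.

Theorem mainTheorem9 (F : finFieldType) (R : rcfType) (n : nat)
    (d : 'I_n -> nat) (a : 'I_n -> F)
    (hd : forall i, (0 < d i)%N) (ha : forall i, a i != 0) :
  let q : R := (#|F|)%:R in
  `| (Nstar0 d a)%:R - (q - 1) ^+ n / q |
    <= (q - 1) / q
       + \sum_(e < n) \sum_(S : {set 'I_n} | #|S| == (n - e)%N)
           (lcount d S)%:R * ((q - 1) * (Num.sqrt q) ^+ (n - e) / q).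
Proof.
cbv zeta; set q : R := #|F|%:R; set m := #|F|.-1.
have mq : (m%:R : R) = q - 1 by rewrite /m -subn1 natrB // ltnW // q_gt1.
have mq_ge0 : 0 <= (m%:R : R) / q by rewrite divr_ge0 ?ler0n.
rewrite -mq; apply: le_trans (Nstar0_dev_le_real R d ha) _.
apply: le_trans (ler_wpM2l mq_ge0 (sum_pow_exp_support_le (m_gt0 F) hd (sqrtr_ge0 q))) _.
rewrite mulrDr mulr1 lerD2l mulr_sumr; apply: ler_sum => e _.
by rewrite mulr_sumr; apply: ler_sum => S _; rewrite mulrCA [_ / q * _]mulrAC.
Qed.
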